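(* Let $\lambda_0, \lambda_1$ be real numbers and $z = a + bi$ with $a \in \mathbb{R}$ and $b > 0$. Suppose $\lambda_0 \geq \max\{\lambda_1, |z|\}$. Then $\lambda_0, \lambda_1, z, \overline{z}$ are the eigenvalues of a $4 \times 4$ normal centrosymmetric nonnegative matrix if and only if $\lambda_0 + \lambda_1 - 2|a| \geq 0$ and $\lambda_0 - \lambda_1 - 2|b| \geq 0$.
   Context: $J$ is the $4 \times 4$ reverse identity matrix (ones on the anti-diagonal, zeros elsewhere). A matrix $Q$ is centrosymmetric if $JQJ = Q$, nonnegative if all entries are nonnegative, and normal if $QQ^* = Q^*Q$. *)

From HB Require Import structures.
From mathcomp Require Import all_boot all_order all_algebra.
From mathcomp Require Import complex.
From mathcomp Require Import reals.
Set Implicit Arguments. Unset Strict Implicit. Unset Printing Implicit Defensive.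
Import Order.TTheory GRing.Theory Num.Theory.
Local Open Scope ring_scope.
Local Open Scope complex_scope.

Definition revid {T : pzRingType} (n : nat) : 'M[T]_n :=
  \matrix_(i < n, j < n) ((i + j)%N == n.-1)%:R.

Definition adjmx {R : rcfType} (m n : nat) (A : 'M[R[i]]_(m, n)) : 'M[R[i]]_(n, m) :=
  (map_mx (@conjc R) A)^T.

Definition centrosymmetric {R : rcfType} (n : nat) (Q : 'M[R[i]]_n) : Prop :=
  revid n *m Q *m revid n = Q.

Definition nonneg_mx {R : rcfType} (m n : nat) (Q : 'M[R[i]]_(m, n)) : Prop :=
  forall i j, exists r : R, 0 <= r /\ Q i j = r%:C.

Definition normal_mx {R : rcfType} (n : nat) (Q : 'M[R[i]]_n) : Prop :=
  Q *m adjmx Q = adjmx Q *m Q.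

Definition has_spectrum {R : rcfType} (n : nat) (Q : 'M[R[i]]_n) (s : seq R[i]) : Prop :=
  char_poly Q = \prod_(x <- s) ('X - x%:P).

From HB Require Import structures.
From mathcomp Require Import all_boot all_order all_algebra.
From mathcomp Require Import complex.
From mathcomp Require Import reals.
From mathcomp Require Import ring lra zify.
Import Order.TTheory GRing.Theory Num.Theory.
Local Open Scope ring_scope.
Local Open Scope complex_scope.

(* Let P = [[1, 1], [J, -J]], so that P^T P = 2.  A centrosymmetric matrix
   Q = [[A, B], [JBJ, JAJ]] satisfies Q P = P diag(M, N) with M = A + BJ and
   N = A - BJ; hence char Q = char M * char N, Q is normal as soon as M and N
   are, and Q is nonnegative iff |N| <= M entrywise.  A nonnegative 2x2 matrix
   has real eigenvalues, so M carries l0, l1 and N carries z, conj z.  Then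
   l0 + l1 = tr M >= |tr N| = 2|a|, and (l0 - l1)^2 = disc M >= -disc N = 4b^2.
   Conversely M = [[p, q], [q, p]] and N = [[a, b], [-b, a]] with
   p = (l0 + l1)/2 and q = (l0 - l1)/2 do the job. *)

Set Implicit Arguments.
Unset Strict Implicit.
Unset Printing Implicit Defensive.

Section RevId.
Variables (T : pzRingType) (n : nat).
Local Notation J := (revid n : 'M[T]_n).

Lemma revidE (i j : 'I_n) : J i j = (j == rev_ord i)%:R.
Proof.
have lt_i := ltn_ord i; rewrite mxE -val_eqE /=.
suff -> : ((i + j)%N == n.-1) = (j == (n - i.+1)%N :> nat) by [].
by apply/idP/idP => /eqP h; apply/eqP; lia.
Qed.

Lemma revid_mulmxE p (X : 'M[T]_(n, p)) i j : (J *m X) i j = X (rev_ord i) j.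
Proof.
rewrite mxE (bigD1 (rev_ord i)) //= revidE eqxx mul1r big1 ?addr0 // => k.
by rewrite revidE => /negbTE ->; rewrite mul0r.
Qed.

Lemma mulmx_revidE m (X : 'M[T]_(m, n)) i j : (X *m J) i j = X i (rev_ord j).
Proof.
rewrite mxE (bigD1 (rev_ord j)) //= revidE rev_ordK eqxx mulr1 big1 ?addr0 // => k.
by rewrite revidE -(inj_eq rev_ord_inj) rev_ordK eq_sym => /negbTE ->; rewrite mulr0.
Qed.

Lemma revid_mul_revid : J *m J = 1%:M.
Proof.
by apply/matrixP => i j; rewrite revid_mulmxE revidE !mxE rev_ordK eq_sym.
Qed.

Lemma tr_revid : J^T = J.
Proof. by apply/matrixP => i j; rewrite !mxE addnC. Qed.

Lemma revid_block : revid (n + n) = block_mx 0 J J 0 :> 'M[T]_(n + n).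
Proof.
apply/matrixP => i j.
case: (split_ordP i) => i' ->; case: (split_ordP j) => j' ->;
  rewrite ?block_mxEul ?block_mxEur ?block_mxEdl ?block_mxEdr !mxE /=;
  have := ltn_ord i'; have := ltn_ord j' => lt_j lt_i;
  do 2?[case: eqP => ?] => //=; lia.
Qed.

Lemma revid_conj_block (A B C D : 'M[T]_n) :
  revid (n + n) *m block_mx A B C D *m revid (n + n)
  = block_mx (J *m D *m J) (J *m C *m J) (J *m B *m J) (J *m A *m J).
Proof.
by rewrite revid_block !mulmx_block !mul0mx !mulmx0 !addr0 !add0r.
Qed.

End RevId.

Lemma char_poly_similar (F : fieldType) n (P Q D : 'M[F]_n) :
  P \in unitmx -> Q *m P = P *m D -> char_poly Q = char_poly D.
Proof.
move=> P_unit QP; pose Px := map_mx polyC P.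
have : char_poly_mx Q *m Px = Px *m char_poly_mx D.
  by rewrite mulmxBl mulmxBr mul_scalar_mx mul_mx_scalar -!map_mxM QP.
move/(congr1 determinant); rewrite !det_mulmx det_map_mx [LHS]mulrC => /mulfI; apply.
by rewrite polyC_eq0 -unitfE -unitmxE.
Qed.

Definition real_normal {T : comPzRingType} {n} (A : 'M[T]_n) : Prop :=
  A *m A^T = A^T *m A.

Section RealNormal.
Variables (T : comPzRingType) (n : nat).

Lemma real_normalZ c (A : 'M[T]_n) : real_normal A -> real_normal (c *: A).
Proof.
by rewrite /real_normal linearZ /= -!scalemxAl -!scalemxAr => ->.
Qed.

Lemma real_normal_block_diag (M N : 'M[T]_n) :
  real_normal M -> real_normal N -> real_normal (block_mx M 0 0 N).
Proof.
rewrite /real_normal tr_block_mx !trmx0 !mulmx_block => -> ->.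
by rewrite !mulmx0 !mul0mx !addr0 !add0r.
Qed.

Lemma real_normal_conj c (P D : 'M[T]_n) :
  P^T *m P = c%:M -> real_normal D -> real_normal (P *m D *m P^T).
Proof.
move=> PtP normD.
have mulE U V : P *m U *m P^T *m (P *m V *m P^T) = c *: (P *m (U *m V) *m P^T).
  by rewrite -!mulmxA (mulmxA P^T) PtP mul_scalar_mx -!scalemxAr !mulmxA.
by rewrite /real_normal !trmx_mul trmxK !(mulmxA P) !mulE normD.
Qed.

End RealNormal.

Lemma char_poly_block_diag (T : comNzRingType) n1 n2 (M : 'M[T]_n1) (N : 'M[T]_n2) :
  char_poly (block_mx M 0 0 N) = char_poly M * char_poly N.
Proof.
rewrite /char_poly /char_poly_mx map_block_mx (scalar_mx_block n1 n2).
by rewrite opp_block_mx add_block_mx !raddf0 ?oppr0 !addr0 det_ublock.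
Qed.

Section CentroMx.
Variables (F : numFieldType) (n : nat).
Local Notation J := (revid n : 'M[F]_n).
Local Notation P := (block_mx 1%:M 1%:M J (- J) : 'M[F]_(n + n)).

Definition centro_mx (M N : 'M[F]_n) : 'M[F]_(n + n) :=
  2^-1 *: block_mx (M + N) ((M - N) *m J) (J *m (M - N)) (J *m (M + N) *m J).

Lemma scale_half_add p q (X : 'M[F]_(p, q)) : 2^-1 *: (X + X) = X.
Proof. by rewrite -mulr2n -scaler_nat scalerA mulVf ?scale1r ?pnatr_eq0. Qed.

Lemma centro_mx_block (A B : 'M[F]_n) :
  centro_mx (A + B *m J) (A - B *m J) = block_mx A B (J *m B *m J) (J *m A *m J).
Proof.
rewrite /centro_mx.
have -> : A + B *m J + (A - B *m J) = A + A by rewrite addrACA subrr addr0.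
have -> : A + B *m J - (A - B *m J) = B *m J + B *m J.
  by rewrite opprB addrC -addrA addKr.
rewrite scale_block_mx; congr block_mx.
- exact: scale_half_add.
- by rewrite scalemxAl scale_half_add -mulmxA revid_mul_revid mulmx1.
- by rewrite scalemxAr scale_half_add mulmxA.
- by rewrite scalemxAl scalemxAr scale_half_add.
Qed.

Lemma centrosym_centro_mx (Q : 'M[F]_(n + n)) :
  revid (n + n) *m Q *m revid (n + n) = Q ->
  Q = centro_mx (ulsubmx Q + ursubmx Q *m J) (ulsubmx Q - ursubmx Q *m J).
Proof.
move=> centroQ; rewrite centro_mx_block -[LHS]submxK.
have := centroQ; rewrite -{1}[Q]submxK revid_conj_block => QE.
have := congr1 dlsubmx QE; have := congr1 drsubmx QE.
by rewrite block_mxKdl block_mxKdr => -> ->.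
Qed.

Lemma revid_conj_centro_mx (M N : 'M[F]_n) :
  revid (n + n) *m centro_mx M N *m revid (n + n) = centro_mx M N.
Proof.
rewrite -scalemxAr -scalemxAl revid_conj_block; congr (_ *: block_mx _ _ _ _).
- by rewrite !mulmxA revid_mul_revid mul1mx -mulmxA revid_mul_revid mulmx1.
- by rewrite mulmxA revid_mul_revid mul1mx.
- by rewrite -!mulmxA revid_mul_revid mulmx1.
Qed.

Lemma trP_mulP : P^T *m P = 2%:M.
Proof.
rewrite tr_block_mx !trmx1 linearN /= tr_revid mulmx_block (scalar_mx_block n n).
rewrite !mul1mx !mulmxN !mulNmx opprK revid_mul_revid subrr.
by congr block_mx; rewrite -raddfD.
Qed.

Lemma centro_mx_conj (M N : 'M[F]_n) :
  centro_mx M N = 2^-1 *: (P *m block_mx M 0 0 N *m P^T).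
Proof.
rewrite tr_block_mx !trmx1 linearN /= tr_revid !mulmx_block.
rewrite ?mulmx0 ?mul0mx !mulmx1 !mul1mx ?addr0 ?add0r ?mulmxN ?mulNmx ?opprK.
by rewrite /centro_mx mulmxBl mulmxBr mulmxDr mulmxDl.
Qed.

Lemma char_poly_centro_mx (M N : 'M[F]_n) :
  char_poly (centro_mx M N) = char_poly M * char_poly N.
Proof.
have P_unit : P \in unitmx.
  suff /mulmx1_unit[] : 2^-1 *: P^T *m P = 1%:M by [].
  by rewrite -scalemxAl trP_mulP -scalemx1 scalerA mulVf ?scale1r ?pnatr_eq0.
rewrite -char_poly_block_diag; apply: (char_poly_similar P_unit).
rewrite centro_mx_conj -scalemxAl -!mulmxA trP_mulP mul_mx_scalar -scalemxAr.
by rewrite scalerA mulVf ?scale1r ?pnatr_eq0.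
Qed.

Lemma real_normal_centro_mx (M N : 'M[F]_n) :
  real_normal M -> real_normal N -> real_normal (centro_mx M N).
Proof.
move=> normM normN; rewrite centro_mx_conj.
exact/real_normalZ/(real_normal_conj trP_mulP)/real_normal_block_diag.
Qed.

End CentroMx.

Lemma centro_mx_ge0 (R : realFieldType) n (M N : 'M[R]_n) :
  (forall i j, 0 <= centro_mx M N i j) <-> (forall i j, `|N i j| <= M i j).
Proof.
split=> [Q_ge0 i j | dom i j].
- have := Q_ge0 (lshift n i) (lshift n j).
  have := Q_ge0 (lshift n i) (rshift n (rev_ord j)).
  rewrite ![centro_mx _ _ _ _]mxE block_mxEul block_mxEur mulmx_revidE rev_ordK !mxE.
  rewrite ler_norml; lra.
- rewrite [centro_mx _ _ _ _]mxE.
  case: (split_ordP i) => i' ->; case: (split_ordP j) => j' ->;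
    rewrite ?block_mxEul ?block_mxEur ?block_mxEdl ?block_mxEdr;
    rewrite ?mulmx_revidE ?revid_mulmxE ?mulmx_revidE !mxE;
    have := dom i' j'; have := dom i' (rev_ord j');
    have := dom (rev_ord i') j'; have := dom (rev_ord i') (rev_ord j');
    rewrite !ler_norml; lra.
Qed.

Lemma mxtrace_mx22 (T : comNzRingType) (A : 'M[T]_2) : \tr A = A 0 0 + A 1 1.
Proof.
by rewrite /mxtrace big_ord_recl big_ord1; congr (A _ _ + A _ _); apply: val_inj.
Qed.

Lemma det_mx22 (T : comNzRingType) (A : 'M[T]_2) :
  \det A = A 0 0 * A 1 1 - A 0 1 * A 1 0.
Proof.
rewrite (expand_det_row _ 0) big_ord_recl big_ord1 /cofactor !det_mx11 !mxE /=.
rewrite expr0 expr1 mul1r mulN1r mulrN.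
by congr (A _ _ * A _ _ - A _ _ * A _ _); apply: val_inj.
Qed.

Section Mx22.
Variable T : comNzRingType.

Definition mx22 (x y z w : T) : 'M[T]_2 :=
  \matrix_(i, j) if i == 0 then (if j == 0 then x else y)
                 else (if j == 0 then z else w).

Definition quadp (s p : T) : {poly T} := 'X^2 - s%:P * 'X + p%:P.

Definition mxdisc (A : 'M[T]_2) : T := \tr A ^+ 2 - 4 * \det A.

Lemma char_poly_mx22 (A : 'M[T]_2) : char_poly A = quadp (\tr A) (\det A).
Proof.
rewrite /char_poly !det_mx22 mxtrace_mx22 /quadp !mxE /=.
by rewrite polyCB polyCD !polyCM; ring.
Qed.

Lemma mul_XsubC_quadp (u v : T) :
  ('X - u%:P) * ('X - v%:P) = quadp (u + v) (u * v).
Proof. by rewrite /quadp polyCD polyCM; ring. Qed.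

Lemma quadp_neq0 (s p : T) : quadp s p != 0.
Proof.
apply/negP => /eqP /(congr1 (coefp 2)) /eqP.
by rewrite /quadp /= !coefE /= mulr0 subr0 addr0 oner_eq0.
Qed.

Lemma quadp_inj (s p s' p' : T) : quadp s p = quadp s' p' -> s = s' /\ p = p'.
Proof.
move=> eq_q; have := congr1 (coefp 1) eq_q; have := congr1 (coefp 0) eq_q.
rewrite /quadp /= !coefE /= !(mulr0, mulr1, oppr0, subr0, sub0r, addr0, add0r).
by move=> -> /oppr_inj ->.
Qed.

Lemma real_normal_mx22 (x y z w : T) :
  y ^+ 2 = z ^+ 2 -> (x - w) * (y - z) = 0 -> real_normal (mx22 x y z w).
Proof.
move=> sq_yz cross; have cross' : x * z + y * w = x * y + z * w.
  by rewrite -[RHS]subr0 -cross; ring.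
apply/matrixP => i j; rewrite !mxE !big_ord_recl !big_ord0 !mxE /= !addr0.
case: i j => [[|[|//]] ?] [[|[|//]] ?] /=.
- by rewrite -!expr2 sq_yz.
- exact: cross'.
- by rewrite ![_ * x]mulrC ![w * _]mulrC cross'.
- by rewrite -!expr2 sq_yz.
Qed.

End Mx22.

Lemma map_quadp (S T : comNzRingType) (f : {rmorphism S -> T}) (s p : S) :
  map_poly f (quadp s p) = quadp (f s) (f p).
Proof.
by rewrite /quadp rmorphD rmorphB /= map_polyXn rmorphM /= map_polyX !map_polyC.
Qed.

Lemma mx22_dominated (R : realFieldType) (M N : 'M[R]_2) :
  (forall i j, `|N i j| <= M i j) ->
  [/\ `|\tr N| <= \tr M, 0 <= mxdisc M & - mxdisc N <= mxdisc M].
Proof.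
move=> dom; rewrite /mxdisc !mxtrace_mx22 !det_mx22.
have := dom 0 0; have := dom 1 1; rewrite !ler_norml => /andP[? ?] /andP[? ?].
have M01_ge0 := le_trans (normr_ge0 _) (dom 0 1).
have M10_ge0 := le_trans (normr_ge0 _) (dom 1 0).
have offdiag : - (N 0 1 * N 1 0) <= M 0 1 * M 1 0.
  apply: le_trans (ler_pM (normr_ge0 _) (normr_ge0 _) (dom 0 1) (dom 1 0)).
  by rewrite -normrM -normrN ler_norm.
have := sqr_ge0 (M 0 0 - M 1 1); have := sqr_ge0 (N 0 0 - N 1 1).
have := mulr_ge0 M01_ge0 M10_ge0.
split; [by apply/andP; split; lra | nra | nra].
Qed.

Section ComplexQuadratic.
Variable R : rcfType.

Lemma conj_pair_quadp (a b : R) :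
  ('X - (a +i* b)%:P) * ('X - (a -i* b)%:P)
  = quadp (2 * a)%:C (a ^+ 2 + b ^+ 2)%:C.
Proof.
rewrite mul_XsubC_quadp; congr quadp; simpc; congr (_ +i* _); ring.
Qed.

Lemma root_quadp_nonreal (s p a b : R) :
  b != 0 -> root (quadp s%:C p%:C) (a +i* b) -> s = 2 * a /\ p = a ^+ 2 + b ^+ 2.
Proof.
move=> b_neq0; rewrite /root /quadp !hornerE expr2; simpc.
rewrite eq_complex /= => /andP[/eqP re_eq /eqP im_eq].
have : (2 * a - s) * b = 0 by rewrite -im_eq; ring.
move/eqP; rewrite mulf_eq0 (negbTE b_neq0) orbF subr_eq0 => /eqP s_eq.
by split => //; rewrite -s_eq in re_eq; nra.
Qed.

Lemma quadp_mul_eq (s p s' p' u v a b : R) :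
  b != 0 -> 0 <= s ^+ 2 - 4 * p ->
  quadp s p * quadp s' p' = quadp u v * quadp (2 * a) (a ^+ 2 + b ^+ 2) ->
  [/\ s = u, p = v, s' = 2 * a & p' = a ^+ 2 + b ^+ 2].
Proof.
move=> b_neq0 disc_ge0 eq_q.
have : root (map_poly (real_complex R) (quadp s p * quadp s' p')) (a +i* b).
  rewrite eq_q rmorphM /= !map_quadp -conj_pair_quadp.
  by rewrite !rootM root_XsubC eqxx !orbT.
rewrite rmorphM /= !map_quadp rootM => /orP[] /root_quadp_nonreal[] // s_eq p_eq.
  have : 0 < b ^+ 2 by rewrite exprn_even_gt0.
  by move: disc_ge0; rewrite s_eq p_eq; nra.
move: eq_q; rewrite s_eq p_eq => /(mulIf (quadp_neq0 _ _)) /quadp_inj[-> ->].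
by split.
Qed.

End ComplexQuadratic.

Section RealToComplex.
Variable R : rcfType.
Local Notation "A ^C" := (map_mx (real_complex R) A).

Lemma nonneg_mxP m n (Qc : 'M[R[i]]_(m, n)) :
  nonneg_mx Qc <-> exists2 Q : 'M[R]_(m, n), Qc = Q^C & forall i j, 0 <= Q i j.
Proof.
split=> [Qc_ge0 | [Q -> Q_ge0] i j]; last by exists (Q i j); rewrite mxE.
exists (map_mx (@complex.Re R) Qc) => [|i j].
  by apply/matrixP => i j; rewrite !mxE; have [r [_ ->]] := Qc_ge0 i j.
by rewrite mxE; have [r [r_ge0 ->]] := Qc_ge0 i j.
Qed.

Lemma centrosymmetric_map n (Q : 'M[R]_n) :
  centrosymmetric Q^C <-> revid n *m Q *m revid n = Q.
Proof.
have revidC : (revid n)^C = revid n by apply/matrixP => i j; rewrite !mxE rmorph_nat.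
by rewrite /centrosymmetric -revidC -!map_mxM; split=> [/map_mx_inj | ->].
Qed.

Lemma normal_mx_map n (Q : 'M[R]_n) : normal_mx Q^C <-> real_normal Q.
Proof.
have adjC : adjmx Q^C = Q^T^C by apply/matrixP => i j; rewrite !mxE conjc_real.
by rewrite /normal_mx adjC -!map_mxM; split=> [/map_mx_inj | ->].
Qed.

Lemma has_spectrum_map n (Q : 'M[R]_n) (l0 l1 a b : R) :
  has_spectrum Q^C [:: l0%:C; l1%:C; a +i* b; a -i* b] <->
  char_poly Q = quadp (l0 + l1) (l0 * l1) * quadp (2 * a) (a ^+ 2 + b ^+ 2).
Proof.
rewrite /has_spectrum -map_char_poly !big_cons big_nil mulr1 mulrA conj_pair_quadp.
rewrite mul_XsubC_quadp -!rmorphD -rmorphM -!map_quadp -rmorphM.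
by split=> [/map_poly_inj | ->].
Qed.

End RealToComplex.

Lemma centro_spectrum_necessary (R : rcfType) (M N : 'M[R]_2) (l0 l1 a b : R) :
  b != 0 -> l1 <= l0 -> (forall i j, `|N i j| <= M i j) ->
  char_poly M * char_poly N
    = quadp (l0 + l1) (l0 * l1) * quadp (2 * a) (a ^+ 2 + b ^+ 2) ->
  0 <= l0 + l1 - 2 * `|a| /\ 0 <= l0 - l1 - 2 * `|b|.
Proof.
move=> b_neq0 l1_le_l0 /mx22_dominated[trN discM_ge0 discN].
rewrite !char_poly_mx22 => /quadp_mul_eq[] // trM detM trN' detN.
move: trN discN; rewrite /mxdisc trM detM trN' detN normrM ger0_norm // => trN discN.
have := normr_ge0 b; have := real_normK (num_real b).
split; [lra | nra].
Qed.

Lemma centro_spectrum_sufficient (R : realFieldType) (l0 l1 a b : R) :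
  0 <= l0 + l1 - 2 * `|a| -> 0 <= l0 - l1 - 2 * `|b| ->
  exists M N : 'M[R]_2,
    [/\ forall i j, `|N i j| <= M i j, real_normal M, real_normal N &
        char_poly M * char_poly N
        = quadp (l0 + l1) (l0 * l1) * quadp (2 * a) (a ^+ 2 + b ^+ 2)].
Proof.
move=> a_le b_le; pose p := (l0 + l1) / 2; pose q := (l0 - l1) / 2.
exists (mx22 p q q p), (mx22 a b (- b) a); split.
- move=> i j; rewrite !mxE; case: ifP => _; case: ifP => _; rewrite ?normrN /p /q; lra.
- by apply: real_normal_mx22; rewrite ?subrr ?mul0r.
- by apply: real_normal_mx22; rewrite ?sqrrN ?subrr ?mul0r.
- rewrite !char_poly_mx22 !mxtrace_mx22 !det_mx22 !mxE /= /p /q.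
  by congr (quadp _ _ * quadp _ _); field.
Qed.

Theorem theorem3p2 (R : realType) (l0 l1 a b : R) :
  0 < b ->
  Num.max l1 (Num.sqrt (a ^+ 2 + b ^+ 2)) <= l0 ->
  ((exists Q : 'M[R[i]]_4,
       nonneg_mx Q /\ normal_mx Q /\ centrosymmetric Q /\
       has_spectrum Q [:: l0%:C; l1%:C; a +i* b; a -i* b])
   <->
   (0 <= l0 + l1 - 2 * `|a| /\ 0 <= l0 - l1 - 2 * `|b|)).
Proof.
move=> b_gt0; rewrite ge_max => /andP[l1_le_l0 _].
split=> [[_ [/nonneg_mxP[Q -> Q_ge0] [_ [/centrosymmetric_map Q_cs]]]] | [a_le b_le]].
- rewrite (@centrosym_centro_mx _ 2 Q Q_cs) in Q_ge0 *.
  move/has_spectrum_map; rewrite (@char_poly_centro_mx _ 2).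
  apply: centro_spectrum_necessary (lt0r_neq0 b_gt0) l1_le_l0 _.
  exact/centro_mx_ge0.
- have [M [N [dom normM normN char_MN]]] := centro_spectrum_sufficient a_le b_le.
  exists (map_mx (real_complex R) (centro_mx M N)); split; [|split; [|split]].
  + apply/nonneg_mxP; exists (centro_mx M N) => //.
    exact/(@centro_mx_ge0 _ 2 M N).
  + exact/normal_mx_map/(@real_normal_centro_mx _ 2 M N normM normN).
  + exact/centrosymmetric_map/(@revid_conj_centro_mx _ 2).
  + by apply/has_spectrum_map; rewrite (@char_poly_centro_mx _ 2) char_MN.
Qed.
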